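(* Let $M^4$ be a smooth $4$-manifold, $\sigma$ a smooth non-constant function on $M^4$ with $\sigma_i:=\partial\sigma/\partial x^i$, and $h_{11}(t)>0$ a Riemannian metric on $\mathbb{R}$ with $h^{11}=1/h_{11}$ and $\text{\textsc{k}}^1_{11}=\frac{h^{11}}{2}\frac{dh_{11}}{dt}$. On the domain of $J^{1*}(\mathbb{R},M^4)$ (coordinates $(t,x^i,p^1_i)$) where $\mathcal{P}^{1111}:=p^1_1p^1_2p^1_3p^1_4>0$, consider $\overset{*}{H}=4e^{-2\sigma(x)}h_{11}(t)[\mathcal{P}^{1111}]^{1/2}$. Then the Cartan canonical $N$-linear connection of $\overset{*}{H}$ has adapted components (no sum over $i,j,k$) $$C\Gamma(N)=\left(\text{\textsc{k}}^1_{11},\ A^i_{j1}=0,\ H^i_{jk}=4\delta^i_j\delta^i_k\sigma_i,\ C^{j(k)}_{i(1)}=\mathsf{C}^{jk}_i\cdot\frac{p^1_i}{p^1_jp^1_k}\right),$$ where $\mathsf{C}^{jk}_i=\frac{1-2\delta^{jk}-2\delta^j_i-2\delta^k_i+8\delta^j_i\delta^k_i}{8}$, i.e. $\mathsf{C}^{jk}_i=\frac18$ if $i,j,k$ are pairwise distinct, $-\frac18$ if exactly two of $i,j,k$ coincide, and $\frac38$ if $i=j=k$.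
   Context: The fundamental metrical d-tensor is $\overset{*}{g}{}^{ij}=\frac{h^{11}}{2}\frac{\partial^2\overset{*}{H}}{\partial p^1_i\partial p^1_j}$, with inverse matrix $(\overset{*}{g}_{ij})$. The canonical nonlinear connection has components $\underset{1}{N}{}^{(1)}_{(i)1}=\text{\textsc{k}}^1_{11}p^1_i$ and $\underset{2}{N}{}^{(1)}_{(i)j}=-4\sigma_ip^1_i\delta_{ij}$ (no sum), and produces the adapted vector fields $\frac{\delta}{\delta t}=\frac{\partial}{\partial t}-\text{\textsc{k}}^1_{11}p^1_r\frac{\partial}{\partial p^1_r}$, $\frac{\delta}{\delta x^i}=\frac{\partial}{\partial x^i}+4\sigma_ip^1_i\frac{\partial}{\partial p^1_i}$ (no sum over $i$). The Cartan canonical connection components are defined by (summation over repeated indices) $A^i_{j1}=\frac{\overset{*}{g}{}^{il}}{2}\frac{\delta\overset{*}{g}_{lj}}{\delta t}$, $H^i_{jk}=\frac{\overset{*}{g}{}^{ir}}{2}\left(\frac{\delta\overset{*}{g}_{jr}}{\delta x^k}+\frac{\delta\overset{*}{g}_{kr}}{\delta x^j}-\frac{\delta\overset{*}{g}_{jk}}{\delta x^r}\right)$, $C^{j(k)}_{i(1)}=-\frac{\overset{*}{g}_{ir}}{2}\left(\frac{\partial\overset{*}{g}{}^{jr}}{\partial p^1_k}+\frac{\partial\overset{*}{g}{}^{kr}}{\partial p^1_j}-\frac{\partial\overset{*}{g}{}^{jk}}{\partial p^1_r}\right)$, together with the component $\text{\textsc{k}}^1_{11}$ on the time direction. *)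

From HB Require Import structures.
From mathcomp Require Import all_boot all_order all_algebra.
From mathcomp Require Import all_classical all_reals all_analysis.
Import Order.TTheory GRing.Theory Num.Theory.
Import numFieldNormedType.Exports.
Set Implicit Arguments. Unset Strict Implicit. Unset Printing Implicit Defensive.
Local Open Scope ring_scope.
Local Open Scope classical_set_scope.

Section Defs.
Context {R : realType}.

Fixpoint Cn {V : normedModType R} (n : nat) (U : set V) (f : V -> R) : Prop :=
  match n with
  | 0 => forall x, U x -> {for x, continuous f}
  | m.+1 => (forall x, U x -> differentiable f x) /\
            forall v : V, Cn m U (fun x => 'D_v f x)
  end.

Definition smooth_on {V : normedModType R} (U : set V) (f : V -> R) :=
  forall n, Cn n U f.

Definition evec (i : 'I_4) : 'rV[R]_4 := delta_mx 0 i.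

(* functions on J^{1*}(R, M^4) in coordinates (t, x^i, p^1_i) *)
Definition jfun := R -> 'rV[R]_4 -> 'rV[R]_4 -> R.

Definition pd_t (f : jfun) : jfun := fun t x p => derive1 (fun s : R => f s x p) t.
Definition pd_x (i : 'I_4) (f : jfun) : jfun :=
  fun t x p => derive1 (fun s : R => f t (x + s *: evec i) p) 0.
Definition pd_p (i : 'I_4) (f : jfun) : jfun :=
  fun t x p => derive1 (fun s : R => f t x (p + s *: evec i)) 0.

Definition sigma_d (sigma : 'rV[R]_4 -> R) (i : 'I_4) (x : 'rV[R]_4) : R :=
  derive1 (fun s : R => sigma (x + s *: evec i)) 0.

Definition P1111 (p : 'rV[R]_4) : R := \prod_(i < 4) p 0 i.

Definition domain (U : set 'rV[R]_4) (x p : 'rV[R]_4) : Prop :=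
  U x /\ 0 < P1111 p.

Definition Hstar (sigma : 'rV[R]_4 -> R) (h11 : R -> R) : jfun :=
  fun t x p => 4 * expR (- 2 * sigma x) * h11 t * Num.sqrt (P1111 p).

Definition kappa (h11 : R -> R) (t : R) : R := (h11 t)^-1 / 2 * derive1 h11 t.

Definition gup (H : jfun) (h11 : R -> R) (i j : 'I_4) : jfun :=
  fun t x p => (h11 t)^-1 / 2 * pd_p i (pd_p j H) t x p.

Definition gupM (H : jfun) (h11 : R -> R) (t : R) (x p : 'rV[R]_4) : 'M[R]_4 :=
  \matrix_(i, j) gup H h11 i j t x p.

Definition glow (H : jfun) (h11 : R -> R) (i j : 'I_4) : jfun :=
  fun t x p => invmx (gupM H h11 t x p) i j.

(* adapted vector fields of the canonical nonlinear connection *)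
Definition delta_t (h11 : R -> R) (f : jfun) : jfun :=
  fun t x p => pd_t f t x p - kappa h11 t * \sum_(r < 4) p 0 r * pd_p r f t x p.
Definition delta_x (sigma : 'rV[R]_4 -> R) (i : 'I_4) (f : jfun) : jfun :=
  fun t x p => pd_x i f t x p + 4 * sigma_d sigma i x * p 0 i * pd_p i f t x p.

Definition Acomp (sigma : 'rV[R]_4 -> R) (h11 : R -> R) (i j : 'I_4) : jfun :=
  let H := Hstar sigma h11 in
  fun t x p => \sum_(l < 4) gup H h11 i l t x p / 2 *
                 delta_t h11 (glow H h11 l j) t x p.

Definition Hcomp (sigma : 'rV[R]_4 -> R) (h11 : R -> R) (i j k : 'I_4) : jfun :=
  let H := Hstar sigma h11 in
  fun t x p => \sum_(r < 4) gup H h11 i r t x p / 2 *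
    (delta_x sigma k (glow H h11 j r) t x p + delta_x sigma j (glow H h11 k r) t x p
     - delta_x sigma r (glow H h11 j k) t x p).

(* Ccomp i j k = C^{j(k)}_{i(1)} *)
Definition Ccomp (sigma : 'rV[R]_4 -> R) (h11 : R -> R) (i j k : 'I_4) : jfun :=
  let H := Hstar sigma h11 in
  fun t x p => - \sum_(r < 4) glow H h11 i r t x p / 2 *
    (pd_p k (gup H h11 j r) t x p + pd_p j (gup H h11 k r) t x p
     - pd_p r (gup H h11 j k) t x p).

Definition kd (i j : 'I_4) : R := (i == j)%:R.

Definition Cconst (i j k : 'I_4) : R :=
  (1 - 2 * kd j k - 2 * kd j i - 2 * kd k i + 8 * kd j i * kd k i) / 8.

End Defs.

From HB Require Import structures.
From mathcomp Require Import all_boot all_order all_algebra.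
From mathcomp Require Import all_classical all_reals all_analysis.
From mathcomp Require Import ring lra.
Import Order.TTheory GRing.Theory Num.Theory.
Import numFieldNormedType.Exports.
Local Open Scope ring_scope.
Local Open Scope classical_set_scope.

(* H* is a positive multiple of the square root of the monomial P1111 = p_1 p_2 p_3 p_4,
   so its p-derivatives are again monomials: g^ij = e^(-2 sigma) sqrt P (1 - 2 kd i j) / (2 p_i p_j).
   Since the matrix (1 - 2 kd i j) squares to 4 I in dimension 4, the inverse is
   g_ij = p_i p_j (1 - 2 kd i j) / (2 e^(-2 sigma) sqrt P).  Differentiating along p_k
   multiplies g^ij by (1/2 - kd k i - kd k j) / p_k and g_ij by the opposite factor, and
   differentiating along x^k multiplies g_ij by 2 sigma_k.  As g_ij is independent of t and homogeneous of degree 0 in p,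
   the A-components vanish; the H- and C-components reduce to finite identities between
   Kronecker deltas over four indices. *)

Section Kronecker.
Context {R : realType}.
Implicit Types (i j k l r : 'I_4).

Lemma kdii (i : 'I_4) : kd i i = 1 :> R.
Proof. by rewrite /kd eqxx. Qed.

Lemma kd_neq {i j : 'I_4} : i != j -> kd i j = 0 :> R.
Proof. by rewrite /kd => /negPf ->. Qed.

Lemma kdC (i j : 'I_4) : kd i j = kd j i :> R.
Proof. by rewrite /kd eq_sym. Qed.

Lemma sum_ord4 (F : 'I_4 -> R) :
  \sum_(l < 4) F l = F 0 + F 1 + F 2%:R + F 3%:R.
Proof.
rewrite !big_ord_recl big_ord0 addr0 !addrA.
by congr (_ + _ + _ + _); congr F; apply: val_inj.
Qed.

Lemma ord4P (P : 'I_4 -> Prop) : P 0 -> P 1 -> P 2%:R -> P 3%:R -> forall i, P i.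
Proof.
move=> P0 P1 P2 P3 [[|[|[|[|//]]]] lt_i4].
- by rewrite (_ : Ordinal _ = 0) //; apply: val_inj.
- by rewrite (_ : Ordinal _ = 1) //; apply: val_inj.
- by rewrite (_ : Ordinal _ = 2%:R) //; apply: val_inj.
- by rewrite (_ : Ordinal _ = 3%:R) //; apply: val_inj.
Qed.

(* The matrix (1 - 2 kd i j) is J - 2 I with J the all-ones matrix; since J^2 = 4 J
   in dimension 4, its square is 4 I. *)
Lemma sum_one_sub_2kd (a b : 'I_4) :
  \sum_(l < 4) (1 - 2 * kd a l) * (1 - 2 * kd l b) = 4 * kd a b :> R.
Proof.
rewrite sum_ord4; elim/ord4P: a; elim/ord4P: b; rewrite /kd /=; lra.
Qed.

Lemma sum_kdD_sub_half (j l : 'I_4) : \sum_(r < 4) (kd r j + kd r l - 1/2) = 0 :> R.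
Proof. by rewrite sum_ord4; elim/ord4P: j; elim/ord4P: l; rewrite /kd /=; lra. Qed.

Lemma kd_mul_div (u : 'I_4 -> R) j k r : u r != 0 ->
  (kd r j + kd r k) * (u j * u k / u r) = kd r j * u k + kd r k * u j.
Proof.
move=> ur; case: (eqVneq r j) => [<-|nrj]; case: (eqVneq r k) => [<-|nrk];
  rewrite ?kdii ?(kd_neq nrj) ?(kd_neq nrk); field => //.
Qed.

Lemma sum_H_coef (sd u : 'I_4 -> R) i j k :
  \sum_(r < 4) (1 - 2 * kd i r) * (sd k * u j * (1 - 2 * kd j r) * (kd k j + kd k r)
      + sd j * u k * (1 - 2 * kd k r) * (kd j k + kd j r)
      - sd r * (1 - 2 * kd j k) * (kd r j * u k + kd r k * u j))
  = 8 * u i * kd i j * kd i k * sd i.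
Proof.
rewrite sum_ord4; elim/ord4P: i; elim/ord4P: j; elim/ord4P: k; rewrite /kd /=; ring.
Qed.

Lemma sum_C_coef i j k :
  \sum_(r < 4) (1 - 2 * kd i r) * ((1 - 2 * kd j r) * (1/2 - kd k j - kd k r)
     + (1 - 2 * kd k r) * (1/2 - kd j k - kd j r) - (1 - 2 * kd j k) * (1/2 - kd r j - kd r k))
  = - (1 - 2 * kd j k - 2 * kd j i - 2 * kd k i + 8 * kd j i * kd k i) :> R.
Proof.
rewrite sum_ord4; elim/ord4P: i; elim/ord4P: j; elim/ord4P: k; rewrite /kd /=; lra.
Qed.

End Kronecker.

Section Coordinates.
Context {R : realType}.
Implicit Types (q : 'rV[R]_4) (s : R).

Lemma entry_shift q (k l : 'I_4) s : (q + s *: evec k) 0 l = q 0 l + s * kd k l.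
Proof. by rewrite !mxE /kd eqxx /= eq_sym. Qed.

Definition P1111_off (k : 'I_4) q : R := \prod_(l < 4 | l != k) q 0 l.

Lemma P1111_split q k : P1111 q = P1111_off k q * q 0 k.
Proof. by rewrite /P1111 (bigD1 k) //= mulrC. Qed.

Lemma P1111_shift q k s : P1111 (q + s *: evec k) = P1111_off k q * (q 0 k + s).
Proof.
rewrite (P1111_split _ k) entry_shift kdii mulr1; congr (_ * _).
by apply: eq_bigr => l lk; rewrite entry_shift kdC (kd_neq lk) mulr0 addr0.
Qed.

Lemma is_derive_entry_shift q k j :
  is_derive (0:R) 1 (fun s => (q + s *: evec k) 0 j) (kd k j).
Proof.
rewrite (_ : (fun s => _) = (fun s => q 0 j + s * kd k j)); last first.
  by apply: funext => s; rewrite entry_shift.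
by apply: is_derive_eq; rewrite scaler0 add0r mul1r add0r [_%:A]mulr1.
Qed.

Section PositiveP1111.
Context {q : 'rV[R]_4} (Pq : 0 < P1111 q).

Lemma P1111_entry_neq0 k : q 0 k != 0.
Proof. by apply: contraTneq Pq => qk0; rewrite (P1111_split _ k) qk0 mulr0 ltxx. Qed.

Lemma P1111_off_neq0 k : P1111_off k q != 0.
Proof. by apply: contraTneq Pq => off0; rewrite (P1111_split _ k) off0 mul0r ltxx. Qed.

Lemma sqrtP1111_neq0 : Num.sqrt (P1111 q) != 0.
Proof. by rewrite sqrtr_eq0 -ltNge. Qed.

(* Along the line P1111 is affine, so it stays positive while |s| < |q 0 k|. *)
Lemma near_P1111_shift_gt0 k : \forall s \near 0, 0 < P1111 (q + s *: evec k).
Proof.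
have qk_gt0 : 0 < `|q 0 k| by rewrite normr_gt0 P1111_entry_neq0.
near=> s.
have small_s : `|s| < `|q 0 k|.
  by near: s; exists `|q 0 k| => // y /=; rewrite sub0r normrN.
have slope_gt0 : 0 < P1111_off k q * q 0 k by rewrite -P1111_split.
have : `|P1111_off k q * s| < P1111_off k q * q 0 k.
  by rewrite normrM -(gtr0_norm slope_gt0) normrM ltr_pM2l // normr_gt0 P1111_off_neq0.
have := ler_norm (- (P1111_off k q * s)); rewrite normrN P1111_shift mulrDr; lra.
Unshelve. all: by end_near. Qed.

Lemma is_derive_sqrtP1111_shift k :
  is_derive (0:R) 1 (fun s => Num.sqrt (P1111 (q + s *: evec k)))
    (Num.sqrt (P1111 q) / (2 * q 0 k)).
Proof.
rewrite (_ : (fun s => _) = Num.sqrt \o (fun s => P1111_off k q * (q 0 k + s))); last first.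
  by apply: funext => s; rewrite /= P1111_shift.
have P0 : 0 < P1111_off k q * (q 0 k + 0) by rewrite addr0 -P1111_split.
have D := is_derive1_sqrt P0.
apply: is_derive_eq.
rewrite addr0 -P1111_split add0r [_ *: 1]mulr1.
have -> : P1111_off k q = Num.sqrt (P1111 q) ^+ 2 / q 0 k.
  by rewrite sqr_sqrtr ?ltW // (P1111_split q k) mulfK // P1111_entry_neq0.
by field; rewrite sqrtP1111_neq0 P1111_entry_neq0.
Qed.

End PositiveP1111.

End Coordinates.

Section Metric.
Context {R : realType}.
Implicit Types (q x : 'rV[R]_4) (s : R) (sigma : 'rV[R]_4 -> R).

Lemma scalerE (a b : R) : a *: b = a * b. Proof. by []. Qed.

Definition root_ratio q (j r : 'I_4) : R := Num.sqrt (P1111 q) / (q 0 j * q 0 r).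

Lemma is_derive_root_ratio q k j r : 0 < P1111 q ->
  is_derive (0:R) 1 (fun s => root_ratio (q + s *: evec k) j r)
    (root_ratio q j r * (1/2 - kd k j - kd k r) / q 0 k).
Proof.
move=> Pq; rewrite /root_ratio.
have Dsqrt := is_derive_sqrtP1111_shift Pq k.
have Dj := is_derive_entry_shift q k j; have Dr := is_derive_entry_shift q k r.
have nz : (q + 0 *: evec k) 0 j * (q + 0 *: evec k) 0 r != 0.
  by rewrite scale0r addr0 mulf_neq0 ?P1111_entry_neq0.
have DV := @is_deriveV R (fun s => (q + s *: evec k) 0 j * (q + s *: evec k) 0 r) 0 _ 1 nz _.
apply: is_derive_eq.
rewrite !scalerE scale0r addr0.
have qj := P1111_entry_neq0 Pq j; have qr := P1111_entry_neq0 Pq r.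
have qk := P1111_entry_neq0 Pq k.
case: (eqVneq k j) => [<-|nkj]; case: (eqVneq k r) => [<-|nkr].
- by rewrite !kdii; field; rewrite qk.
- by rewrite kdii (kd_neq nkr); field; rewrite qk qr.
- by rewrite kdii (kd_neq nkj); field; rewrite qk qj.
- by rewrite (kd_neq nkj) (kd_neq nkr); field; rewrite qk qj qr.
Qed.

Definition conf sigma x : R := expR (- 2 * sigma x).

Lemma conf_neq0 sigma x : conf sigma x != 0.
Proof. by rewrite gt_eqF // expR_gt0. Qed.

Lemma is_derive_sigma_shift sigma x k : differentiable sigma x ->
  is_derive (0:R) 1 (fun s => sigma (x + s *: evec k)) (sigma_d sigma k x).
Proof.
move=> dsigma; rewrite /sigma_d derive1E; apply: derivableP.
apply/derivable1_diffP.
have -> : (fun s => sigma (x + s *: evec k)) = sigma \o (fun s => x + s *: evec k) by [].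
apply: differentiable_comp; last by rewrite scale0r addr0.
by apply: differentiableD; [exact: differentiable_cst | exact: differentiableZl].
Qed.

Lemma is_derive_conf_shift sigma x k : differentiable sigma x ->
  is_derive (0:R) 1 (fun s => conf sigma (x + s *: evec k))
    (conf sigma x * (- 2 * sigma_d sigma k x)).
Proof.
move=> dsigma; have Dsigma := is_derive_sigma_shift sigma x k dsigma.
have Dlin : is_derive (0:R) 1 (fun s => - 2 * sigma (x + s *: evec k)) (- 2 * sigma_d sigma k x).
  by apply: is_derive_eq; rewrite !scalerE.
have Dexp := is_derive_expR (- 2 * sigma (x + 0 *: evec k)).
have := @is_derive1_comp R expR (fun s => - 2 * sigma (x + s *: evec k)) 0 _ _ Dexp Dlin.
by rewrite /conf scale0r addr0.
Qed.

Lemma root_ratio_neq0 q j r : 0 < P1111 q -> root_ratio q j r != 0.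
Proof.
by move=> Pq; rewrite mulf_neq0 ?invr_eq0 ?mulf_neq0 ?sqrtP1111_neq0 ?P1111_entry_neq0.
Qed.

Lemma pd_p_Hstar sigma h11 t x q j : 0 < P1111 q ->
  pd_p j (Hstar sigma h11) t x q = 2 * conf sigma x * h11 t * Num.sqrt (P1111 q) / q 0 j.
Proof.
move=> Pq; rewrite /pd_p /Hstar derive1E.
have Dsqrt := is_derive_sqrtP1111_shift Pq j.
apply: derive_val; apply: is_derive_eq.
by rewrite /conf -[LHS]/(_ * _); field; rewrite P1111_entry_neq0.
Qed.

Definition gup_val sigma x q (i j : 'I_4) : R :=
  conf sigma x / 2 * (1 - 2 * kd i j) * root_ratio q i j.

Lemma gup_Hstar sigma h11 t x q i j : 0 < h11 t -> 0 < P1111 q ->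
  gup (Hstar sigma h11) h11 i j t x q = gup_val sigma x q i j.
Proof.
move=> ht Pq; rewrite /gup /pd_p derive1E.
rewrite (@near_eq_derive _ _ _ _ (fun s => 2 * conf sigma x * h11 t *
    Num.sqrt (P1111 (q + s *: evec i)) / (q + s *: evec i) 0 j)); last first.
  by near=> s; apply: pd_p_Hstar; near: s; apply: near_P1111_shift_gt0.
have Dsqrt := is_derive_sqrtP1111_shift Pq i.
have qj0 : (q + 0 *: evec i) 0 j != 0 by rewrite scale0r addr0 P1111_entry_neq0.
have DV := is_deriveV qj0 (is_derive_entry_shift q i j).
erewrite derive_val; last first.
rewrite !scalerE scale0r addr0 /gup_val /root_ratio.
have qi := P1111_entry_neq0 Pq i; have qj := P1111_entry_neq0 Pq j.
case: (eqVneq i j) => [<-|nij].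
  by rewrite kdii; field; rewrite qi (gt_eqF ht).
by rewrite (kd_neq nij); field; rewrite qi qj (gt_eqF ht).
Unshelve. all: by end_near. Qed.

Definition glow_val sigma x q (i j : 'I_4) : R :=
  (1 - 2 * kd i j) / (2 * conf sigma x * root_ratio q i j).

Lemma glow_Hstar sigma h11 t x q i j : 0 < h11 t -> 0 < P1111 q ->
  glow (Hstar sigma h11) h11 i j t x q = glow_val sigma x q i j.
Proof.
move=> ht Pq; rewrite /glow.
set M := gupM _ _ _ _ _; set N := \matrix_(a, b) glow_val sigma x q a b.
have qn := P1111_entry_neq0 Pq.
have MN : M *m N = 1%:M.
  apply/matrixP => a b; rewrite !mxE.
  under eq_bigr => l _ do rewrite !mxE gup_Hstar //.
  rewrite (eq_bigr (fun l => q 0 b / q 0 a / 4 * ((1 - 2 * kd a l) * (1 - 2 * kd l b)))).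
    rewrite -mulr_sumr sum_one_sub_2kd.
    case: (eqVneq a b) => [<-|nab]; last by rewrite (kd_neq nab) !mulr0.
    by rewrite kdii /=; field; rewrite qn.
  move=> l _; rewrite /gup_val /glow_val /root_ratio.
  by field; rewrite !qn conf_neq0 sqrtP1111_neq0.
have [Mu _] := mulmx1_unit MN.
by rewrite -[invmx M]mulmx1 -MN mulmxA mulVmx // mul1mx mxE.
Qed.

Lemma pd_p_gup sigma h11 t x q k j r : 0 < h11 t -> 0 < P1111 q ->
  pd_p k (gup (Hstar sigma h11) h11 j r) t x q =
  gup_val sigma x q j r * (1/2 - kd k j - kd k r) / q 0 k.
Proof.
move=> ht Pq; rewrite /pd_p derive1E.
rewrite (@near_eq_derive _ _ _ _ (fun s => gup_val sigma x (q + s *: evec k) j r)); last first.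
  by near=> s; apply: gup_Hstar => //; near: s; apply: near_P1111_shift_gt0.
have Dratio := is_derive_root_ratio q k j r Pq.
apply: derive_val; apply: is_derive_eq.
by rewrite /gup_val !scalerE !mulrA.
Unshelve. all: by end_near. Qed.

Lemma pd_p_glow sigma h11 t x q k j r : 0 < h11 t -> 0 < P1111 q ->
  pd_p k (glow (Hstar sigma h11) h11 j r) t x q =
  glow_val sigma x q j r * (kd k j + kd k r - 1/2) / q 0 k.
Proof.
move=> ht Pq; rewrite /pd_p derive1E.
rewrite (@near_eq_derive _ _ _ _ (fun s => glow_val sigma x (q + s *: evec k) j r)); last first.
  by near=> s; apply: glow_Hstar => //; near: s; apply: near_P1111_shift_gt0.
have Dratio := is_derive_root_ratio q k j r Pq.
have nz : 2 * conf sigma x * root_ratio (q + 0 *: evec k) j r != 0.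
  by rewrite scale0r addr0 (mulf_neq0 _ (root_ratio_neq0 _ _ _ Pq)) // mulf_neq0 ?pnatr_eq0 ?conf_neq0.
have DV := @is_deriveV R (fun s => 2 * conf sigma x * root_ratio (q + s *: evec k) j r) 0 _ 1 nz _.
apply: derive_val; apply: is_derive_eq.
rewrite /glow_val !scalerE scale0r addr0.
by field; rewrite conf_neq0 (root_ratio_neq0 _ _ _ Pq) P1111_entry_neq0.
Unshelve. all: by end_near. Qed.

Lemma pd_x_glow sigma h11 t x q k j r : 0 < h11 t -> 0 < P1111 q ->
  differentiable sigma x ->
  pd_x k (glow (Hstar sigma h11) h11 j r) t x q = 2 * sigma_d sigma k x * glow_val sigma x q j r.
Proof.
move=> ht Pq dsigma; rewrite /pd_x derive1E.
rewrite (_ : (fun s => _) = (fun s => glow_val sigma (x + s *: evec k) q j r)); last first.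
  by apply: funext => s; rewrite glow_Hstar.
have Dconf := is_derive_conf_shift sigma x k dsigma.
have nz : 2 * conf sigma (x + 0 *: evec k) * root_ratio q j r != 0.
  by rewrite scale0r addr0 (mulf_neq0 _ (root_ratio_neq0 _ _ _ Pq)) // mulf_neq0 ?pnatr_eq0 ?conf_neq0.
have DV := @is_deriveV R (fun s => 2 * conf sigma (x + s *: evec k) * root_ratio q j r) 0 _ 1 nz _.
apply: derive_val; apply: is_derive_eq.
rewrite /glow_val !scalerE scale0r addr0.
by field; rewrite conf_neq0 (root_ratio_neq0 _ _ _ Pq).
Qed.

Lemma delta_x_glow sigma h11 t x q k j r : 0 < h11 t -> 0 < P1111 q ->
  differentiable sigma x ->
  delta_x sigma k (glow (Hstar sigma h11) h11 j r) t x q =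
  4 * sigma_d sigma k x * glow_val sigma x q j r * (kd k j + kd k r).
Proof.
move=> ht Pq dsigma; rewrite /delta_x pd_x_glow // pd_p_glow //.
by field; rewrite P1111_entry_neq0.
Qed.

(* The Euler field p_r d/dp_r annihilates g_jl, which is homogeneous of degree 0 in p. *)
Lemma delta_t_glow sigma h11 t x q j l : (forall t, 0 < h11 t) -> 0 < P1111 q ->
  delta_t h11 (glow (Hstar sigma h11) h11 j l) t x q = 0.
Proof.
move=> ht Pq; rewrite /delta_t /pd_t.
rewrite (_ : (fun s => _) = cst (glow_val sigma x q j l)); last first.
  by apply: funext => s; rewrite glow_Hstar.
rewrite derive1_cst (eq_bigr (fun r => glow_val sigma x q j l * (kd r j + kd r l - 1/2))).
  by rewrite -mulr_sumr sum_kdD_sub_half !mulr0 subr0.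
by move=> r _; rewrite pd_p_glow //; field; rewrite P1111_entry_neq0.
Qed.

Lemma H_summand sigma x q i j k r : 0 < P1111 q ->
  let sd := sigma_d sigma ^~ x in
  gup_val sigma x q i r / 2 *
    (4 * sd k * glow_val sigma x q j r * (kd k j + kd k r)
     + 4 * sd j * glow_val sigma x q k r * (kd j k + kd j r)
     - 4 * sd r * glow_val sigma x q j k * (kd r j + kd r k))
  = (2 * q 0 i)^-1 * ((1 - 2 * kd i r) *
      (sd k * q 0 j * (1 - 2 * kd j r) * (kd k j + kd k r)
       + sd j * q 0 k * (1 - 2 * kd k r) * (kd j k + kd j r)
       - sd r * (1 - 2 * kd j k) * (kd r j * q 0 k + kd r k * q 0 j))).
Proof.
move=> Pq sd.
rewrite -(kd_mul_div (fun l => q 0 l) j k r) ?P1111_entry_neq0 //.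
rewrite /gup_val /glow_val /root_ratio.
by field; rewrite !P1111_entry_neq0 // conf_neq0 sqrtP1111_neq0.
Qed.

Lemma C_summand sigma x q i j k r : 0 < P1111 q ->
  glow_val sigma x q i r / 2 *
    (gup_val sigma x q j r * (1/2 - kd k j - kd k r) / q 0 k
     + gup_val sigma x q k r * (1/2 - kd j k - kd j r) / q 0 j
     - gup_val sigma x q j k * (1/2 - kd r j - kd r k) / q 0 r)
  = q 0 i / (8 * q 0 j * q 0 k) * ((1 - 2 * kd i r) *
      ((1 - 2 * kd j r) * (1/2 - kd k j - kd k r)
       + (1 - 2 * kd k r) * (1/2 - kd j k - kd j r)
       - (1 - 2 * kd j k) * (1/2 - kd r j - kd r k))).
Proof.
move=> Pq; rewrite /gup_val /glow_val /root_ratio.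
by field; rewrite !P1111_entry_neq0 // conf_neq0 sqrtP1111_neq0.
Qed.

End Metric.

Theorem mainTheorem2 (R : realType) (U : set 'rV[R]_4) (sigma : 'rV[R]_4 -> R)
    (h11 : R -> R) :
  open U ->
  smooth_on U sigma ->
  (exists x y, U x /\ U y /\ sigma x <> sigma y) ->
  smooth_on setT h11 ->
  (forall t, 0 < h11 t) ->
  forall (t : R) (x p : 'rV[R]_4), domain U x p ->
    (forall i j : 'I_4, Acomp sigma h11 i j t x p = 0) /\
    (forall i j k : 'I_4,
        Hcomp sigma h11 i j k t x p = 4 * kd i j * kd i k * sigma_d sigma i x) /\
    (forall i j k : 'I_4,
        Ccomp sigma h11 i j k t x p = Cconst i j k * (p 0 i / (p 0 j * p 0 k))).
Proof.
move=> _ sigma_smooth _ _ h11_gt0 t x p [Ux Pp].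
have ht := h11_gt0 t.
have dsigma : differentiable sigma x := (sigma_smooth 1%N).1 x Ux.
have p_neq0 := P1111_entry_neq0 Pp.
split; last split.
- by move=> i j; apply: big1 => l _; rewrite delta_t_glow // mulr0.
- move=> i j k; rewrite /Hcomp.
  under eq_bigr => r _ do rewrite gup_Hstar // !delta_x_glow // H_summand //.
  by rewrite -mulr_sumr sum_H_coef; field; rewrite p_neq0.
- move=> i j k; rewrite /Ccomp.
  under eq_bigr => r _ do rewrite glow_Hstar // !pd_p_gup // C_summand //.
  by rewrite -mulr_sumr sum_C_coef /Cconst; field; rewrite !p_neq0.
Qed.
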